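(* Let $G$ be a finite quasiprimitive permutation group of O'Nan–Scott type $\mathrm{HA}$, $\mathrm{HS}$, $\mathrm{HC}$ or $\mathrm{TW}$, and let $M$ be a point stabilizer. Then $M$ is a perfect code of $G$.
   Context: A permutation group is quasiprimitive if every non-trivial normal subgroup is transitive; the types $\mathrm{HA},\mathrm{HS},\mathrm{HC},\mathrm{TW},\mathrm{SD},\mathrm{CD},\mathrm{AS},\mathrm{PA}$ of quasiprimitive groups are those of Praeger's O'Nan–Scott classification (1997). For a group $G$ with identity $e$ and an inverse-closed subset $S\subseteq G\setminus\{e\}$, the Cayley graph $\mathrm{Cay}(G,S)$ has vertex set $G$ and edges $\{g,sg\}$ for $s\in S$, $g\in G$. A perfect code in a graph is an independent set $C$ of vertices such that every vertex outside $C$ is adjacent to exactly one vertex of $C$. A subgroup $H$ of $G$ is a perfect code of $G$ if some Cayley graph of $G$ admits $H$ as a perfect code. *)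

From mathcomp Require Import all_boot all_fingroup gseries.
Set Implicit Arguments. Unset Strict Implicit. Unset Printing Implicit Defensive.
Import GroupScope.
Local Open Scope group_scope.

Section PerfectCode.
Variable gT : finGroupType.

(* In Cay(G,S) the edges are {g, s g} (s in S): x ~ y iff y * x^-1 \in S. *)
Definition cay_adj (S : {set gT}) (x y : gT) : bool := y * x^-1 \in S.

Definition is_perfect_code_in (G S C : {set gT}) : Prop :=
  [/\ C \subset G,
      (forall x y, x \in C -> y \in C -> ~~ cay_adj S x y) &
      (forall g, g \in G -> g \notin C ->
         #|[set c in C | cay_adj S g c]| = 1%N)].

Definition perfect_code_of (G H : {group gT}) : Prop :=
  H \subset G /\
  exists S : {set gT},
    [/\ S \subset G :\ 1, (forall s, s \in S -> s^-1 \in S)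
      & is_perfect_code_in G S H].
End PerfectCode.

Section PermGroups.
Variable T : finType.
Implicit Types G N : {group {perm T}}.

Definition minnormal_sub N G : Prop := N <| G /\ minnormal N G.

Definition regular_on N : Prop :=
  [transitive N, on [set: T] | 'P] /\ (forall x : T, 'C_N[x | 'P] = 1).

Definition quasiprimitive G : Prop :=
  forall N : {group {perm T}}, N <| G -> N :!=: 1 ->
    [transitive N, on [set: T] | 'P].

Definition typeHA G : Prop :=
  exists N : {group {perm T}}, minnormal_sub N G /\ abelian N.

(* HS / HC: G has exactly two minimal normal subgroups N1 <> N2, each
   non-abelian and regular; in HS they are simple (N_i = T), in HC they are
   not simple (N_i = T^k, k >= 2). *)
Definition two_regular_minnormal G (P : {group {perm T}} -> Prop) : Prop :=
  exists N1 N2 : {group {perm T}},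
    [/\ N1 :!=: N2, minnormal_sub N1 G, minnormal_sub N2 G,
        (forall N, minnormal_sub N G -> N = N1 \/ N = N2) &
        [/\ ~~ abelian N1 /\ ~~ abelian N2, regular_on N1, regular_on N2,
            P N1 & P N2]].

Definition typeHS G : Prop := two_regular_minnormal G (fun N => simple N).
Definition typeHC G : Prop := two_regular_minnormal G (fun N => ~~ simple N).

(* TW: G has a unique minimal normal subgroup N = T^k with k >= 2 and T
   non-abelian simple (i.e. N non-abelian, not simple), and N is regular. *)
Definition typeTW G : Prop :=
  exists N : {group {perm T}},
    [/\ minnormal_sub N G, (forall K, minnormal_sub K G -> K = N),
        ~~ abelian N, ~~ simple N & regular_on N].
End PermGroups.

(* A point stabiliser M = G_a has a normal complement N in each of the four
   types: a transitive normal subgroup acting regularly (in type HA, the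
   abelian minimal normal subgroup is transitive by quasiprimitivity, hence
   regular).  Every g in G then factors uniquely as g = n m with n in N and
   m in M, and m is the unique neighbour of g in M in the Cayley graph
   Cay(G, N \ {1}). *)
From mathcomp Require Import all_boot all_fingroup.

Set Implicit Arguments.
Unset Strict Implicit.
Unset Printing Implicit Defensive.

Import GroupScope.
Local Open Scope group_scope.

Lemma sdprod_perfect_code (gT : finGroupType) (G K H : {group gT}) :
  K ><| H = G -> perfect_code_of G H.
Proof.
move=> defG; have [nsKG sHG _ _ tiKH] := sdprod_context defG.
split=> //; exists (K :\ 1); split.
- exact/setSD/normal_sub.
- by move=> s; rewrite !inE invg_eq1 groupV.
split=> // [x y Hx Hy | g Gg notHg].
  rewrite /cay_adj !inE; apply/negP=> /andP[yx_neq1 Kyx].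
  have : y * x^-1 \in K :&: H by rewrite inE Kyx groupM ?groupV.
  by rewrite tiKH inE (negPf yx_neq1).
have [k [h [Kk Hh def_g uniq_kh]]] := mem_sdprod defG Gg.
suff -> : [set c in H | cay_adj (K :\ 1) g c] = [set h] by rewrite cards1.
apply/setP=> c; rewrite /cay_adj !inE; apply/idP/eqP=> [/and3P[Hc _ Kcg] | ->].
  have Kgc : g * c^-1 \in K by rewrite -[g * c^-1]invgK invMg invgK groupV.
  by case: (uniq_kh _ _ Kgc Hc); rewrite ?mulgKV.
have hg_eq : h * g^-1 = k^-1 by rewrite def_g invMg mulgA mulgV mul1g.
rewrite Hh hg_eq groupV Kk andbT invg_eq1; apply: contraNneq notHg => k1.
by rewrite def_g k1 mul1g.
Qed.

Lemma abelian_atrans_astab1 (aT : finGroupType) (rT : finType)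
    (to : {action aT &-> rT}) (N : {group aT}) (S : {set rT}) (x : rT) :
  abelian N -> [transitive N, on S | to] -> x \in S ->
  'C_N[x | to] = 'C_N(S | to).
Proof.
move=> cNN trN Sx.
have sCSx : 'C_N(S | to) \subset 'C_N[x | to] by rewrite setIS // astabS ?sub1set.
apply/eqP; rewrite eqEsubset sCSx andbT subsetI subsetIl /=.
apply/subsetP=> n /setIP[Nn /astab1P xn].
apply/astabP=> y /(atransP2 trN Sx)[m Nm ->].
by rewrite -actM (centsP cNN _ Nm _ Nn) actM xn.
Qed.

Lemma astab_perm_setT (T : finType) : 'C([set: T] | 'P) = 1.
Proof.
apply/trivgP/subsetP=> p /astabP fix_p; apply/set1P/permP=> y.
by rewrite perm1 -[p y]apermE fix_p.
Qed.

Lemma atrans_normal_sdprod (aT : finGroupType) (rT : finType)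
    (to : {action aT &-> rT}) (G N : {group aT}) (x : rT) :
  N <| G -> [transitive N, on [set: rT] | to] -> 'C_N[x | to] = 1 ->
  N ><| 'C_G[x | to] = G.
Proof.
move=> nsNG trN tiNx; have [sNG nNG] := andP nsNG.
have nNGx : 'C_G[x | to] \subset 'N(N) := subset_trans (subsetIl _ _) nNG.
have trG : [transitive G, on [set: rT] | to].
  rewrite (atrans_supgroup sNG trN); apply/subsetP=> g _.
  by rewrite !inE; apply/subsetP=> y; rewrite !inE.
have defG : 'C_G[x | to] * N = G.
  exact/(subgroup_transitiveP (in_setT x) sNG trG).
rewrite sdprodE //; first by rewrite -(normC nNGx).
by rewrite setIA (setIidPl sNG).
Qed.

Lemma minnormal_sub_nontrivial (T : finType) (N G : {group {perm T}}) :
  minnormal_sub N G -> N :!=: 1.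
Proof. by case=> _ /mingroupp/andP[]. Qed.

Theorem lemma5p2 (T : finType) (G : {group {perm T}}) (a : T) :
  quasiprimitive G ->
  (typeHA G \/ typeHS G \/ typeHC G \/ typeTW G) ->
  perfect_code_of G ('C_G[a | 'P])%G.
Proof.
move=> qpG types.
suff [N [nsNG trN tiNa]] : exists N : {group {perm T}},
    [/\ N <| G, [transitive N, on [set: T] | 'P] & 'C_N[a | 'P] = 1].
  exact/sdprod_perfect_code/(atrans_normal_sdprod nsNG trN tiNa).
case: types => [[N [minN cNN]] | [|[]] [N]].
- have trN := qpG N minN.1 (minnormal_sub_nontrivial minN).
  exists N; split=> //; first exact: minN.1.
  by rewrite (abelian_atrans_astab1 cNN trN) ?inE // astab_perm_setT setIg1.
- by move=> [N2 [_ [nsNG _] _ _ [_ [trN regN] _ _ _]]]; exists N.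
- by move=> [N2 [_ [nsNG _] _ _ [_ [trN regN] _ _ _]]]; exists N.
- by move=> [[nsNG _] _ _ _ [trN regN]]; exists N.
Qed.
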